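(* Let $m,n\ge 0$ with $m+n\ge 3$. Then the surjective homomorphism of Leibniz superalgebras $\psi:\mathfrak{stl}(m,n,\mathcal A)\to\mathfrak{sl}(m,n,\mathcal A)$, $\psi(v_{ij}(a))=E_{ij}(a)$, is a central extension; that is, $[t,x]=[x,t]=0$ for all $t\in\operatorname{Ker}\psi$ and all $x\in\mathfrak{stl}(m,n,\mathcal A)$.
   Context: Standing assumptions: $K$ is a field with $\operatorname{char}K\ne 2,3$, and $\mathcal A$ is an associative unital $K$-algebra. A Leibniz superalgebra is a $\mathbb Z_2$-graded $K$-vector space $L=L_0\oplus L_1$ with a bilinear bracket satisfying $[L_\sigma,L_{\sigma'}]\subseteq L_{\sigma+\sigma'}$ and $[[a,b],c]=[a,[b,c]]-(-1)^{|a||b|}[b,[a,c]]$ for homogeneous $a,b,c$. Every Lie superalgebra is a Leibniz superalgebra. For $1\le i,j\le m+n$ put $\tau_{ij}=0$ if $i,j\le m$ or $i,j\ge m+1$, and $\tau_{ij}=1$ otherwise. $\mathfrak{gl}(m,n,\mathcal A)$ is the Lie superalgebra of $(m+n)\times(m+n)$ matrices over $\mathcal A$, where the matrix unit $E_{ij}(a)$ (entry $a$ in position $(i,j)$, zeros elsewhere) has degree $\tau_{ij}$, with bracket $[X,Y]=XY-(-1)^{\alpha\beta}YX$ for $X$ of degree $\alpha$, $Y$ of degree $\beta$. $\mathfrak{sl}(m,n,\mathcal A)$ is the subsuperalgebra generated by all $E_{ij}(a)$ with $i\ne j$, $a\in\mathcal A$ (the derived algebra of $\mathfrak{gl}(m,n,\mathcal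 A)$). The Steinberg Leibniz superalgebra $\mathfrak{stl}(m,n,\mathcal A)$ is the Leibniz superalgebra generated by symbols $v_{ij}(a)$, $1\le i\ne j\le m+n$, $a\in\mathcal A$, with $v_{ij}(a)$ of degree $\tau_{ij}$, subject to: (1) $v_{ij}$ is $K$-linear in $a$; (2) $[v_{ij}(a),v_{kl}(b)]=0$ if $i\ne l$ and $j\ne k$; (3) $[v_{ij}(a),v_{kl}(b)]=v_{il}(ab)$ if $i\ne l$, $j=k$; (4) $[v_{ij}(a),v_{kl}(b)]=-(-1)^{\tau_{ij}\tau_{kl}}v_{kj}(ba)$ if $i=l$, $j\ne k$. *)

From HB Require Import structures.
From mathcomp Require Import all_boot all_order all_algebra.
Set Implicit Arguments. Unset Strict Implicit. Unset Printing Implicit Defensive.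
Import GRing.Theory.
Local Open Scope ring_scope.

Section LeibnizSuper.
Variables (K : fieldType) (L : lmodType K).

(* A Z_2-grading of L: G false = L_0, G true = L_1, two subspaces whose
   direct sum is L. *)
Definition is_Z2grading (G : bool -> L -> Prop) : Prop :=
  (forall s, G s 0 /\ forall (c : K) x y, G s x -> G s y -> G s (c *: x + y)) /\
  (forall x, exists x0 x1, [/\ G false x0, G true x1 & x = x0 + x1]) /\
  (forall x, G false x -> G true x -> x = 0).

Definition is_leibniz_superalgebra (G : bool -> L -> Prop) (br : L -> L -> L)
  : Prop :=
  [/\ is_Z2grading G,
      (forall (c : K) x y z, br (c *: x + y) z = c *: br x z + br y z),
      (forall (c : K) x y z, br z (c *: x + y) = c *: br z x + br z y),
      (forall s t x y, G s x -> G t y -> G (s (+) t) (br x y)) &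
      (forall s t u a b c, G s a -> G t b -> G u c ->
         br (br a b) c = br a (br b c) - ((-1) ^+ (s && t)) *: br b (br a c))].

Definition generated_by (br : L -> L -> L) (gen : L -> Prop) : Prop :=
  forall P : L -> Prop,
    P 0 -> (forall (c : K) x y, P x -> P y -> P (c *: x + y)) ->
    (forall x y, P x -> P y -> P (br x y)) ->
    (forall x, gen x -> P x) -> forall x, P x.
End LeibnizSuper.

Section GL.
Variables (K : fieldType) (A : algType K) (m n : nat).

Definition idx_par (i : 'I_(m + n)) : bool := (m <= i)%N.
Definition tau (i j : 'I_(m + n)) : bool := idx_par i (+) idx_par j.

Definition Emx (i j : 'I_(m + n)) (a : A) : 'M[A]_(m + n) :=
  \matrix_(k, l) (if (k == i) && (l == j) then a else 0).

Definition mx_part (s : bool) (X : 'M[A]_(m + n)) : 'M[A]_(m + n) :=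
  \matrix_(k, l) (if tau k l == s then X k l else 0).

Definition mx_homog (s : bool) (X : 'M[A]_(m + n)) : Prop := mx_part s X = X.

Definition mx_scale (c : K) (X : 'M[A]_(m + n)) : 'M[A]_(m + n) :=
  map_mx (fun a => c *: a) X.

(* super bracket on gl(m,n,A): bilinear extension of
   [X,Y] = XY - (-1)^(|X||Y|) YX for homogeneous X, Y *)
Definition glbr (X Y : 'M[A]_(m + n)) : 'M[A]_(m + n) :=
  \sum_(s : bool) \sum_(t : bool)
    (mx_part s X *m mx_part t Y
     - ((-1) ^+ (s && t)) *: (mx_part t Y *m mx_part s X)).
End GL.

From HB Require Import structures.
From mathcomp Require Import all_boot all_order all_algebra.
Import GRing.Theory.
Local Open Scope ring_scope.

(* Let H be the span of the homogeneous y with psi y diagonal such that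
   [y, v_kl(c)] and [v_kl(c), y] lie in the root space v_kl(A) for all k <> l.
   Every x satisfies x - lift (psi x) \in H, where lift X = sum_(k<>l) v_kl(X_kl):
   such x include the generators and are closed under brackets, because H is
   closed under brackets and contains every [v_ij(a), v_ji(b)] (for the root
   spaces v_ij(A), v_ji(A) themselves, write v_ij(c) = [v_ip(c), v_pj(1)] with a
   third index p, which exists as m + n >= 3).  So Ker psi lies in H.  The odd
   part of t in Ker psi has odd diagonal image, hence is killed by psi, and
   then so is the even part.  A homogeneous y in H with psi y = 0 brackets each
   v_kl(c) into v_kl(A) with zero (k,l) entry, i.e. to 0, and an element
   annihilating the generators on both sides is central. *)

Section LinearMap.
Variables (R : ringType) (M N : lmodType R) (f : M -> N).
Hypothesis f_lincomb : forall (c : R) x y, f (c *: x + y) = c *: f x + f y.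

Lemma linmap0 : f 0 = 0.
Proof.
have h := f_lincomb 1 0 0; rewrite scaler0 addr0 scale1r in h.
by apply: (addrI (f 0)); rewrite addr0 -h.
Qed.

Lemma linmapD x y : f (x + y) = f x + f y.
Proof. by have := f_lincomb 1 x y; rewrite !scale1r. Qed.

Lemma linmapZ c x : f (c *: x) = c *: f x.
Proof. by have := f_lincomb c x 0; rewrite !addr0 linmap0 addr0. Qed.

Lemma linmapN x : f (- x) = - f x.
Proof. by rewrite -scaleN1r linmapZ scaleN1r. Qed.

Lemma linmap_sum (I : Type) (r : seq I) (P : pred I) (F : I -> M) :
  f (\sum_(i <- r | P i) F i) = \sum_(i <- r | P i) f (F i).
Proof. exact: (big_morph f linmapD linmap0). Qed.

End LinearMap.

Arguments linmap0 {R M N f}.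
Arguments linmapD {R M N f}.
Arguments linmapZ {R M N f}.
Arguments linmapN {R M N f}.
Arguments linmap_sum {R M N f}.

Section SuperbracketDiagonal.
Variables (K : fieldType) (A : algType K) (m n : nat).
Local Notation mx := 'M[A]_(m + n).

Definition diagonal (X : mx) := forall i j, i != j -> X i j = 0.

Lemma diagonal0 : diagonal 0.
Proof. by move=> i j _; rewrite mxE. Qed.

Lemma diagonalD X Y : diagonal X -> diagonal Y -> diagonal (X + Y).
Proof. by move=> dX dY i j ij; rewrite mxE dX // dY // addr0. Qed.

Lemma diagonalB X Y : diagonal X -> diagonal Y -> diagonal (X - Y).
Proof. by move=> dX dY i j ij; rewrite !mxE dX // dY // subr0. Qed.

Lemma diagonalZ (c : A) X : diagonal X -> diagonal (c *: X).
Proof. by move=> dX i j ij; rewrite mxE dX // mulr0. Qed.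

Lemma diagonal_part s X : diagonal X -> diagonal (mx_part s X).
Proof. by move=> dX i j ij; rewrite mxE dX // if_same. Qed.

Lemma diagonal_mul X Y : diagonal X -> diagonal Y -> diagonal (X *m Y).
Proof.
move=> dX dY i j ij; rewrite mxE; apply: big1 => k _.
have [->|ki] := eqVneq k i; first by rewrite dY // mulr0.
by rewrite dX ?mul0r // eq_sym.
Qed.

Lemma diagonal_sum (I : finType) (F : I -> mx) :
  (forall i, diagonal (F i)) -> diagonal (\sum_i F i).
Proof. by move=> dF; apply: big_ind => [||i _]; [exact: diagonal0 | exact: diagonalD | exact: dF]. Qed.

Lemma diagonal_glbr X Y : (forall s t, diagonal (mx_part s X *m mx_part t Y)) ->
  (forall s t, diagonal (mx_part t Y *m mx_part s X)) -> diagonal (glbr X Y).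
Proof.
move=> dXY dYX; apply: diagonal_sum => s; apply: diagonal_sum => t.
by apply: diagonalB; [exact: dXY | apply: diagonalZ; exact: dYX].
Qed.

Lemma diagonal_part_Emx_mul i j a b s t :
  diagonal (mx_part s (Emx i j a) *m mx_part t (Emx j i b)).
Proof.
move=> k l kl; rewrite mxE; apply: big1 => p _; rewrite !mxE.
case: (k =P i) => [ek|_]; last by rewrite !if_same mul0r.
case: (l =P i) => [el|_]; first by move: kl; rewrite ek el eqxx.
by rewrite andbF !if_same mulr0.
Qed.

Lemma diagonal_homog_odd X : diagonal X -> mx_homog true X -> X = 0.
Proof.
move=> dX hX; apply/matrixP => k l; rewrite -hX !mxE.
have [->|kl] := eqVneq k l; first by rewrite /tau addbb.
by rewrite dX // if_same.
Qed.

Lemma mx_part0 s : mx_part s (0 : mx) = 0.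
Proof. by apply/matrixP => i j; rewrite !mxE if_same. Qed.

Lemma glbr0l (Y : mx) : glbr 0 Y = 0.
Proof.
apply: big1 => s _; apply: big1 => t _.
by rewrite mx_part0 mul0mx mulmx0 scaler0 subr0.
Qed.

Lemma glbr0r (X : mx) : glbr X 0 = 0.
Proof.
apply: big1 => s _; apply: big1 => t _.
by rewrite mx_part0 mul0mx mulmx0 scaler0 subr0.
Qed.

Lemma mx_scale1 (X : mx) : mx_scale 1 X = X.
Proof. by apply/matrixP => i j; rewrite mxE scale1r. Qed.

End SuperbracketDiagonal.

Arguments diagonal {K A m n}.

Section LeibnizSuperalgebra.
Variables (K : fieldType) (L : lmodType K) (G : bool -> L -> Prop) (br : L -> L -> L).
Hypothesis HL : is_leibniz_superalgebra G br.

Lemma br_lincomb_l z c x y : br (c *: x + y) z = c *: br x z + br y z.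
Proof. by case: HL => _ h _ _ _; apply: h. Qed.

Lemma br_lincomb_r z c x y : br z (c *: x + y) = c *: br z x + br z y.
Proof. by case: HL => _ _ h _ _; apply: h. Qed.

Lemma br_homog {s t x y} : G s x -> G t y -> G (s (+) t) (br x y).
Proof. by case: HL => _ _ _ h _; apply: h. Qed.

Lemma leibniz {s t u a b c} : G s a -> G t b -> G u c ->
  br (br a b) c = br a (br b c) - (-1) ^+ (s && t) *: br b (br a c).
Proof. by case: HL => _ _ _ _ h; apply: h. Qed.

Lemma leibniz_r {s t u a b c} : G s a -> G t b -> G u c ->
  br a (br b c) = br (br a b) c + (-1) ^+ (s && t) *: br b (br a c).
Proof. by move=> ga gb gc; rewrite (leibniz ga gb gc) subrK. Qed.

Lemma br0l z : br 0 z = 0. Proof. exact: (linmap0 (f := fun w => br w z) (br_lincomb_l z)). Qed.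
Lemma br0r z : br z 0 = 0. Proof. exact: (linmap0 (f := br z) (br_lincomb_r z)). Qed.
Lemma brDl z x y : br (x + y) z = br x z + br y z.
Proof. exact: (linmapD (f := fun w => br w z) (br_lincomb_l z)). Qed.
Lemma brDr z x y : br z (x + y) = br z x + br z y.
Proof. exact: (linmapD (f := br z) (br_lincomb_r z)). Qed.
Lemma brZl z c x : br (c *: x) z = c *: br x z.
Proof. exact: (linmapZ (f := fun w => br w z) (br_lincomb_l z)). Qed.
Lemma brZr z c x : br z (c *: x) = c *: br z x.
Proof. exact: (linmapZ (f := br z) (br_lincomb_r z)). Qed.
Lemma brNl z x : br (- x) z = - br x z.
Proof. exact: (linmapN (f := fun w => br w z) (br_lincomb_l z)). Qed.
Lemma brNr z x : br z (- x) = - br z x.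
Proof. exact: (linmapN (f := br z) (br_lincomb_r z)). Qed.
Lemma br_suml z (I : Type) (r : seq I) (P : pred I) F :
  br (\sum_(i <- r | P i) F i) z = \sum_(i <- r | P i) br (F i) z.
Proof. exact: (linmap_sum (f := fun w => br w z) (br_lincomb_l z)). Qed.
Lemma br_sumr z (I : Type) (r : seq I) (P : pred I) F :
  br z (\sum_(i <- r | P i) F i) = \sum_(i <- r | P i) br z (F i).
Proof. exact: (linmap_sum (f := br z) (br_lincomb_r z)). Qed.

Lemma homog0 s : G s 0.
Proof. by case: HL => [[h _] _ _ _ _]; case: (h s). Qed.

Lemma homog_lincomb {s} c {x y} : G s x -> G s y -> G s (c *: x + y).
Proof. by case: HL => [[h _] _ _ _ _]; case: (h s) => _; apply. Qed.

Lemma homog_decomp x : exists x0 x1, [/\ G false x0, G true x1 & x = x0 + x1].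
Proof. by case: HL => [[_ [h _]] _ _ _ _]. Qed.

Lemma homog_eq0 x : G false x -> G true x -> x = 0.
Proof. by case: HL => [[_ [_ h]] _ _ _ _]; apply: h. Qed.

Lemma homogD s x y : G s x -> G s y -> G s (x + y).
Proof. by move=> gx gy; have := homog_lincomb 1 gx gy; rewrite scale1r. Qed.

Lemma homogB s x y : G s x -> G s y -> G s (x - y).
Proof.
by move=> gx gy; have := homog_lincomb (-1) gy gx; rewrite scaleN1r addrC.
Qed.

Lemma homog_decomp_uniq {a b a' b'} : G false a -> G true b ->
  G false a' -> G true b' -> a + b = a' + b' -> a = a' /\ b = b'.
Proof.
move=> ga gb ga' gb' e.
have e2 : a - a' = b' - b.
  by apply/eqP; rewrite subr_eq addrAC [b' + a']addrC -e addrK.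
have z : a - a' = 0 by apply: homog_eq0; [apply: homogB | rewrite e2; apply: homogB].
split; first by apply/eqP; rewrite -subr_eq0 z.
by apply/eqP; rewrite eq_sym -subr_eq0 -e2 z.
Qed.

Section Generated.
Variable gen : L -> Prop.
Hypothesis gen_homog : forall x, gen x -> exists s, G s x.
Hypothesis L_gen : generated_by br gen.

(* Induction on both homogeneous components at once, since the Leibniz
   identity is only available for homogeneous arguments. *)
Lemma homog_ind (P : L -> Prop) : P 0 ->
  (forall c x y, P x -> P y -> P (c *: x + y)) ->
  (forall x, gen x -> P x) ->
  (forall s t x y, G s x -> G t y -> P x -> P y -> P (br x y)) ->
  forall x, P x.
Proof.
move=> P0 Plin Pgen Pbr.
have PD x y : P x -> P y -> P (x + y).
  by move=> px py; have := Plin 1 x y px py; rewrite scale1r.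
suff Pparts : forall x x0 x1, G false x0 -> G true x1 -> x = x0 + x1 -> P x0 /\ P x1.
  move=> x; have [x0 [x1 [g0 g1 e]]] := homog_decomp x.
  by have [] := Pparts x x0 x1 g0 g1 e; rewrite e; exact: PD.
apply: L_gen.
- move=> x0 x1 g0 g1 e.
  by have [<- <-] := homog_decomp_uniq (homog0 false) (homog0 true) g0 g1 (etrans (addr0 0) e).
- move=> c x y Px Py x0 x1 g0 g1 e.
  have [a0 [a1 [ga0 ga1 ea]]] := homog_decomp x.
  have [b0 [b1 [gb0 gb1 eb]]] := homog_decomp y.
  have [pa0 pa1] := Px a0 a1 ga0 ga1 ea; have [pb0 pb1] := Py b0 b1 gb0 gb1 eb.
  have e2 : (c *: a0 + b0) + (c *: a1 + b1) = x0 + x1.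
    by rewrite -e ea eb scalerDr addrACA.
  have [<- <-] := homog_decomp_uniq (homog_lincomb c ga0 gb0) (homog_lincomb c ga1 gb1) g0 g1 e2.
  by split; apply: Plin.
- move=> x y Px Py x0 x1 g0 g1 e.
  have [a0 [a1 [ga0 ga1 ea]]] := homog_decomp x.
  have [b0 [b1 [gb0 gb1 eb]]] := homog_decomp y.
  have [pa0 pa1] := Px a0 a1 ga0 ga1 ea; have [pb0 pb1] := Py b0 b1 gb0 gb1 eb.
  have e2 : (br a0 b0 + br a1 b1) + (br a0 b1 + br a1 b0) = x0 + x1.
    by rewrite -e ea eb !brDl !brDr addrACA [br a1 b1 + _]addrC.
  have g0' : G false (br a0 b0 + br a1 b1).
    by apply: homogD; [exact: (br_homog ga0 gb0) | exact: (br_homog ga1 gb1)].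
  have g1' : G true (br a0 b1 + br a1 b0).
    by apply: homogD; [exact: (br_homog ga0 gb1) | exact: (br_homog ga1 gb0)].
  have [<- <-] := homog_decomp_uniq g0' g1' g0 g1 e2.
  by split; apply: PD; apply: Pbr; eassumption.
- move=> g gen_g x0 x1 g0 g1 e.
  have [[] gg] := gen_homog g gen_g; have pg := Pgen g gen_g.
  + by have [<- <-] := homog_decomp_uniq (homog0 false) gg g0 g1 (etrans (add0r _) e).
  + by have [<- <-] := homog_decomp_uniq gg (homog0 true) g0 g1 (etrans (addr0 _) e).
Qed.

Lemma central_of_annihilates_gen s z : G s z ->
  (forall g, gen g -> br z g = 0 /\ br g z = 0) ->
  forall x, br z x = 0 /\ br x z = 0.
Proof.
move=> gz zgen; apply: homog_ind => [||//|].
- by rewrite br0r br0l.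
- move=> c x y [zx xz] [zy yz].
  by rewrite br_lincomb_r br_lincomb_l zx xz zy yz scaler0 addr0.
- move=> s' t x y gx gy [zx xz] [zy yz]; split.
  + by rewrite (leibniz_r gz gx gy) zx zy br0l br0r scaler0 addr0.
  + by rewrite (leibniz gx gy gz) yz xz !br0r scaler0 subr0.
Qed.

End Generated.

Arguments central_of_annihilates_gen {gen} gen_homog L_gen {s z}.

Section Steinberg.
Variables (A : algType K) (m n : nat)
  (v : 'I_(m + n) -> 'I_(m + n) -> A -> L) (psi : L -> 'M[A]_(m + n)).
Hypothesis three_le : (3 <= m + n)%N.
Hypothesis v_homog : forall i j a, i != j -> G (tau i j) (v i j a).
Hypothesis v_lincomb : forall i j (c : K) a b, i != j ->
  v i j (c *: a + b) = c *: v i j a + v i j b.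
Hypothesis brvv0 : forall i j k l a b, i != j -> k != l -> i != l -> j != k ->
  br (v i j a) (v k l b) = 0.
Hypothesis brvv_chain : forall i j l a b, i != j -> j != l -> i != l ->
  br (v i j a) (v j l b) = v i l (a * b).
Hypothesis brvv_chain_rev : forall i j k a b, i != j -> k != i -> j != k ->
  br (v i j a) (v k i b) = - ((-1) ^+ (tau i j && tau k i) *: v k j (b * a)).
Hypothesis L_gen : generated_by br (fun x => exists i j a, i != j /\ x = v i j a).
Hypothesis psi_lincomb : forall (c : K) x y,
  psi (c *: x + y) = mx_scale c (psi x) + psi y.
Hypothesis psi_br : forall x y, psi (br x y) = glbr (psi x) (psi y).
Hypothesis psi_homog : forall s x, G s x -> mx_homog s (psi x).
Hypothesis psi_v : forall i j a, i != j -> psi (v i j a) = Emx i j a.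

Lemma psiD x y : psi (x + y) = psi x + psi y.
Proof. by have := psi_lincomb 1 x y; rewrite scale1r mx_scale1. Qed.

Lemma psi0 : psi 0 = 0.
Proof. by apply: (addrI (psi 0)); rewrite -psiD !addr0. Qed.

Lemma v0 i j : i != j -> v i j 0 = 0.
Proof. by move=> ij; apply: linmap0 => c a b; apply: v_lincomb. Qed.
Lemma vD i j a b : i != j -> v i j (a + b) = v i j a + v i j b.
Proof. by move=> ij; apply: linmapD => c a' b'; apply: v_lincomb. Qed.
Lemma vZ i j c a : i != j -> v i j (c *: a) = c *: v i j a.
Proof. by move=> ij; apply: linmapZ => c' a' b'; apply: v_lincomb. Qed.
Lemma vN i j a : i != j -> v i j (- a) = - v i j a.
Proof. by move=> ij; apply: linmapN => c a' b'; apply: v_lincomb. Qed.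

Definition lift (X : 'M[A]_(m + n)) : L :=
  \sum_(p : 'I_(m + n) * 'I_(m + n) | p.1 != p.2) v p.1 p.2 (X p.1 p.2).

Lemma lift_lincomb c X Y : lift (mx_scale c X + Y) = c *: lift X + lift Y.
Proof.
rewrite /lift scaler_sumr -big_split; apply: eq_bigr => p hp /=.
by rewrite /mx_scale !mxE v_lincomb.
Qed.

Lemma lift_diagonal X : diagonal X -> lift X = 0.
Proof. by move=> dX; apply: big1 => p hp; rewrite dX // v0. Qed.

Lemma lift_Emx i j a : i != j -> lift (Emx i j a) = v i j a.
Proof.
move=> ij; rewrite /lift (bigD1 (i, j)) //= big1 ?addr0; first by rewrite mxE !eqxx.
case=> k l /= /andP[kl ne]; rewrite mxE.
case: ifP => [/andP[/eqP ek /eqP el]|_]; last exact: v0.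
by move: ne; rewrite ek el eqxx.
Qed.

Definition in_root k l x := exists d, x = v k l d.

Lemma in_root_v k l d : in_root k l (v k l d). Proof. by exists d. Qed.
Lemma in_root0 k l : k != l -> in_root k l 0.
Proof. by move=> kl; exists 0; rewrite v0. Qed.
Lemma in_rootD k l x y : k != l -> in_root k l x -> in_root k l y -> in_root k l (x + y).
Proof. by move=> kl [d ->] [e ->]; exists (d + e); rewrite vD. Qed.
Lemma in_rootZ k l c x : k != l -> in_root k l x -> in_root k l (c *: x).
Proof. by move=> kl [d ->]; exists (c *: d); rewrite vZ. Qed.
Lemma in_rootN k l x : k != l -> in_root k l x -> in_root k l (- x).
Proof. by move=> kl [d ->]; exists (- d); rewrite vN. Qed.
Lemma in_rootB k l x y : k != l -> in_root k l x -> in_root k l y -> in_root k l (x - y).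
Proof. by move=> kl rx ry; apply: in_rootD => //; apply: in_rootN. Qed.

Arguments in_root0 {k l}. Arguments in_rootD {k l x y}. Arguments in_rootZ {k l c x}.
Arguments in_rootN {k l x}. Arguments in_rootB {k l x y}.

Ltac in_root_closure kl := repeat first
  [ apply: (in_root0 kl) | apply: in_root_v | apply: (in_rootD kl)
  | apply: (in_rootB kl) | apply: (in_rootN kl) | apply: (in_rootZ kl) ].

(* Adds the symmetric form of every index inequality, so that the side
   conditions of the Steinberg relations close by [//]. *)
Ltac sym_neqs := repeat match goal with
  | H : is_true (?x != ?y) |- _ =>
    assert_fails (assert (is_true (y != x)) by assumption);
    let H' := fresh "ne" in have H' : y != x by rewrite eq_sym
  end.

Lemma opp_pair_normalizes_root i j a b k l c : i != j -> k != l ->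
  ~~ ((k == i) && (l == j)) -> ~~ ((k == j) && (l == i)) ->
  in_root k l (br (br (v i j a) (v j i b)) (v k l c)) /\
  in_root k l (br (v k l c) (br (v i j a) (v j i b))).
Proof.
move=> ij kl n1 n2; have ji : j != i by rewrite eq_sym.
have gx := v_homog i j a ij; have gy := v_homog j i b ji; have gz := v_homog k l c kl.
rewrite (leibniz gx gy gz) (leibniz_r gz gx gy).
have [ek|ki] := eqVneq k i.
  subst k; rewrite eqxx /= in n1; sym_neqs.
  rewrite (brvv_chain j i l) // (brvv_chain i j l) // (brvv0 i j i l) // br0r scaler0 subr0.
  split; first exact: in_root_v.
  rewrite (brvv0 i l i j) // br0l add0r (brvv_chain_rev i l j) // brNr brZr.
  by rewrite (brvv_chain i j l) //; in_root_closure kl.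
have [ek|kj] := eqVneq k j.
  subst k; rewrite eqxx /= in n2; sym_neqs.
  rewrite (brvv0 j i j l) // br0r (brvv_chain i j l) // (brvv_chain j i l) //.
  rewrite (brvv_chain_rev j l i) // brNl brZl (brvv_chain_rev i l j) // (brvv0 j l j i) // br0r.
  by split; in_root_closure kl.
have [el|li] := eqVneq l i.
  subst l; sym_neqs.
  rewrite (brvv0 j i k i) // br0r (brvv_chain_rev i j k) // brNr brZr (brvv_chain_rev j i k) //.
  rewrite (brvv_chain k i j) // (brvv_chain k j i) // (brvv0 k i j i) // br0r.
  by split; in_root_closure kl.
have [el|lj] := eqVneq l j.
  subst l; sym_neqs.
  rewrite (brvv_chain_rev j i k) // brNr brZr (brvv_chain_rev i j k) // (brvv0 i j k j) // br0r.
  rewrite (brvv0 k j i j) // br0l (brvv_chain k j i) // (brvv_chain_rev i j k) //.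
  by split; in_root_closure kl.
sym_neqs.
rewrite (brvv0 j i k l) // (brvv0 i j k l) // (brvv0 k l i j) // (brvv0 k l j i) // !br0r !br0l.
by split; in_root_closure kl.
Qed.

(* v_kl(c) = [v_kp(c), v_pl(1)]: normalizing the root spaces through a third
   index p suffices. *)
Lemma normalizes_root_via_l {y s k l p c} : G s y -> k != l -> p != k -> p != l ->
  (forall c', in_root k p (br y (v k p c'))) ->
  (forall c', in_root p l (br y (v p l c'))) ->
  in_root k l (br y (v k l c)).
Proof.
move=> gy kl pk pl ykp ypl; have kp : k != p by rewrite eq_sym.
have -> : v k l c = br (v k p c) (v p l 1) by rewrite brvv_chain // mulr1.
rewrite (leibniz_r gy (v_homog k p c kp) (v_homog p l 1 pl)).
have [d ->] := ykp c; have [e ->] := ypl 1.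
by rewrite !(brvv_chain k p l) //; in_root_closure kl.
Qed.

Lemma normalizes_root_via_r {y s k l p c} : G s y -> k != l -> p != k -> p != l ->
  (forall c', in_root k p (br (v k p c') y)) ->
  (forall c', in_root p l (br (v p l c') y)) ->
  in_root k l (br (v k l c) y).
Proof.
move=> gy kl pk pl kpy ply; have kp : k != p by rewrite eq_sym.
have lk : l != k by rewrite eq_sym.
have -> : v k l c = br (v k p c) (v p l 1) by rewrite brvv_chain // mulr1.
rewrite (leibniz (v_homog k p c kp) (v_homog p l 1 pl) gy).
have [d ->] := ply 1; have [e ->] := kpy c.
by rewrite (brvv_chain k p l) // (brvv_chain_rev p l k) //; in_root_closure kl.
Qed.

Lemma exists_third_index (k l : 'I_(m + n)) : exists p, (p != k) && (p != l).
Proof.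
have [p hp | none] := pickP (fun p : 'I_(m + n) => (p != k) && (p != l)).
  by exists p.
have : (#|'I_(m + n)| <= #|[:: k; l]|)%N.
  apply: subset_leq_card; apply/subsetP => p _.
  by move/negbT: (none p); rewrite negb_and !negbK !inE => /orP[] ->; rewrite ?orbT.
rewrite card_ord => /leq_trans/(_ (card_size _)) le2.
by have := leq_trans three_le le2.
Qed.

Definition cartan_homog s y := [/\ G s y,
  forall k l c, k != l -> in_root k l (br y (v k l c)) /\ in_root k l (br (v k l c) y)
  & diagonal (psi y)].

Lemma cartan_homog0 s : cartan_homog s 0.
Proof.
split; first exact: homog0.
- by move=> k l c kl; rewrite br0l br0r; split; exact: in_root0.
- by rewrite psi0; exact: diagonal0.
Qed.

Lemma cartan_homog_lincomb s c y y' :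
  cartan_homog s y -> cartan_homog s y' -> cartan_homog s (c *: y + y').
Proof.
case=> gy ny dy [gy' ny' dy']; split; first exact: homog_lincomb.
- move=> k l c' kl.
  have [[d1 e1] [d2 e2]] := ny k l c' kl; have [[d3 e3] [d4 e4]] := ny' k l c' kl.
  by rewrite br_lincomb_l br_lincomb_r e1 e2 e3 e4; split; in_root_closure kl.
- by move=> i j ij; rewrite psi_lincomb !mxE dy // dy' // scaler0 addr0.
Qed.

Lemma cartan_homog_br s t y y' :
  cartan_homog s y -> cartan_homog t y' -> cartan_homog (s (+) t) (br y y').
Proof.
case=> gy ny dy [gy' ny' dy']; split; first exact: br_homog.
- move=> k l c kl; have gz := v_homog k l c kl; split.
  + rewrite (leibniz gy gy' gz).
    have [d ->] := (ny' k l c kl).1; have [e ->] := (ny k l c kl).1.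
    have [d' ->] := (ny k l d kl).1; have [e' ->] := (ny' k l e kl).1.
    by in_root_closure kl.
  + rewrite (leibniz_r gz gy gy').
    have [d ->] := (ny k l c kl).2; have [d' ->] := (ny' k l d kl).2.
    have [e ->] := (ny' k l c kl).2; have [e' ->] := (ny k l e kl).1.
    by in_root_closure kl.
- by rewrite psi_br; apply: diagonal_glbr => a b; apply: diagonal_mul; apply: diagonal_part.
Qed.

Lemma cartan_homog_opp_pair {i j} a b :
  i != j -> cartan_homog false (br (v i j a) (v j i b)).
Proof.
move=> ij; have ji : j != i by rewrite eq_sym.
have gX : G false (br (v i j a) (v j i b)).
  have tau_sym : tau j i = tau i j by rewrite /tau addbC.
  by have := br_homog (v_homog i j a ij) (v_homog j i b ji); rewrite tau_sym addbb.
split => // [k l c kl|]; last first.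
  by rewrite psi_br !psi_v //; apply: diagonal_glbr => s t; apply: diagonal_part_Emx_mul.
have [/orP same | /norP[n1 n2]] :=
  boolP (((k == i) && (l == j)) || ((k == j) && (l == i))); last first.
  exact: opp_pair_normalizes_root.
have [p /andP[pk pl]] := exists_third_index k l.
have [pi pj] : p != i /\ p != j by case: same => /andP[/eqP ek /eqP el]; subst k l.
have np r q c' : (p == r) || (p == q) -> r != q ->
    in_root r q (br (br (v i j a) (v j i b)) (v r q c')) /\
    in_root r q (br (v r q c') (br (v i j a) (v j i b))).
  by move=> /orP[]/eqP <- rq; apply: opp_pair_normalizes_root => //;
    apply/nandP; first [by left | by right].
have kp : k != p by rewrite eq_sym.
have pkp : (p == k) || (p == p) by rewrite eqxx orbT.
have ppl : (p == p) || (p == l) by rewrite eqxx.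
split; [apply: (normalizes_root_via_l gX kl pk pl)
       | apply: (normalizes_root_via_r gX kl pk pl)] => c'.
- exact: (np _ _ c' pkp kp).1.
- exact: (np _ _ c' ppl pl).1.
- exact: (np _ _ c' pkp kp).2.
- exact: (np _ _ c' ppl pl).2.
Qed.

Definition cartan y := exists y0 y1,
  [/\ cartan_homog false y0, cartan_homog true y1 & y = y0 + y1].

Lemma cartan0 : cartan 0.
Proof. by exists 0, 0; split; rewrite ?addr0 //; exact: cartan_homog0. Qed.

Lemma cartan_lincomb c {y y'} : cartan y -> cartan y' -> cartan (c *: y + y').
Proof.
move=> [a [b [ha hb ->]]] [a' [b' [ha' hb' ->]]].
exists (c *: a + a'), (c *: b + b'); split; try exact: cartan_homog_lincomb.
by rewrite scalerDr addrACA.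
Qed.

Lemma cartanD y y' : cartan y -> cartan y' -> cartan (y + y').
Proof. by move=> hy hy'; have := cartan_lincomb 1 hy hy'; rewrite scale1r. Qed.

Lemma cartan_of_homog {s y} : cartan_homog s y -> cartan y.
Proof.
case: s => hy; [exists 0, y | exists y, 0]; split; rewrite ?add0r ?addr0 //.
all: exact: cartan_homog0.
Qed.

Lemma cartan_br {y y'} : cartan y -> cartan y' -> cartan (br y y').
Proof.
move=> [a [b [ha hb ->]]] [a' [b' [ha' hb' ->]]].
rewrite !brDl !brDr.
by apply: cartanD; apply: cartanD; apply: cartan_of_homog; apply: cartan_homog_br; eassumption.
Qed.

Lemma cartan_normalizes_root {y k l} c : cartan y -> k != l ->
  in_root k l (br y (v k l c)) /\ in_root k l (br (v k l c) y).
Proof.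
move=> [a [b [[_ na _] [_ nb _] ->]]] kl; rewrite brDl brDr.
have [[d1 e1] [d2 e2]] := na k l c kl; have [[d3 e3] [d4 e4]] := nb k l c kl.
by rewrite e1 e2 e3 e4; split; in_root_closure kl.
Qed.

Lemma cartan_diagonal y : cartan y -> diagonal (psi y).
Proof. by move=> [a [b [[_ _ da] [_ _ db] ->]]]; rewrite psiD; exact: diagonalD. Qed.

Definition decomposable x := cartan (x - lift (psi x)).

Lemma decomposable0 : decomposable 0.
Proof. by rewrite /decomposable psi0 lift_diagonal ?subr0; [exact: cartan0 | exact: diagonal0]. Qed.

Lemma decomposable_lincomb c {x y} :
  decomposable x -> decomposable y -> decomposable (c *: x + y).
Proof.
rewrite /decomposable psi_lincomb lift_lincomb => hx hy.
have -> : c *: x + y - (c *: lift (psi x) + lift (psi y)) =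
          c *: (x - lift (psi x)) + (y - lift (psi y)) by rewrite scalerBr addrACA -opprD.
exact: cartan_lincomb.
Qed.

Lemma decomposableD x y : decomposable x -> decomposable y -> decomposable (x + y).
Proof. by move=> hx hy; have := decomposable_lincomb 1 hx hy; rewrite scale1r. Qed.

Lemma decomposable_sum (I : finType) (P : pred I) (F : I -> L) :
  (forall i, P i -> decomposable (F i)) -> decomposable (\sum_(i | P i) F i).
Proof. by move=> hF; apply: big_ind => //; [exact: decomposable0 | exact: decomposableD]. Qed.

Lemma decomposable_v k l d : k != l -> decomposable (v k l d).
Proof. by move=> kl; rewrite /decomposable psi_v // lift_Emx // subrr; exact: cartan0. Qed.

Lemma decomposable_root {k l x} : k != l -> in_root k l x -> decomposable x.
Proof. by move=> kl [d ->]; exact: decomposable_v. Qed.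

Lemma decomposable_cartan h : cartan h -> decomposable h.
Proof. by move=> hh; rewrite /decomposable lift_diagonal ?subr0 //; exact: cartan_diagonal. Qed.

Lemma decomposable_brvv i j k l a b : i != j -> k != l ->
  decomposable (br (v i j a) (v k l b)).
Proof.
move=> ij kl.
have [/andP[/eqP ek /eqP el] | not_opp] := boolP ((k == j) && (l == i)).
  by subst; apply: decomposable_cartan; apply: (cartan_of_homog (cartan_homog_opp_pair a b ij)).
have [ejk | jk] := eqVneq j k.
  subst k; rewrite eqxx /= in not_opp.
  have il : i != l by rewrite eq_sym.
  by rewrite brvv_chain //; exact: decomposable_v.
have [eil | il] := eqVneq i l.
  subst l; rewrite eqxx andbT in not_opp.
  rewrite brvv_chain_rev //; apply: (decomposable_root not_opp).
  by in_root_closure not_opp.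
by rewrite brvv0 //; exact: decomposable0.
Qed.

Lemma decomposable_br_lift X Y {h h'} : cartan h -> cartan h' ->
  decomposable (br (lift X + h) (lift Y + h')).
Proof.
move=> hh hh'; rewrite brDl !brDr; apply: decomposableD; apply: decomposableD.
- rewrite br_suml; apply: decomposable_sum => p hp.
  by rewrite br_sumr; apply: decomposable_sum => q hq; exact: decomposable_brvv.
- rewrite br_suml; apply: decomposable_sum => p hp; apply: (decomposable_root hp).
  exact: (cartan_normalizes_root _ hh' hp).2.
- rewrite br_sumr; apply: decomposable_sum => p hp; apply: (decomposable_root hp).
  exact: (cartan_normalizes_root _ hh hp).1.
- exact: decomposable_cartan (cartan_br hh hh').
Qed.

Lemma stl_decomposition x : decomposable x.
Proof.
move: x; apply: L_gen; [exact: decomposable0 | exact: decomposable_lincomb | |].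
- move=> x y hx hy.
  by have := decomposable_br_lift (psi x) (psi y) hx hy; rewrite !subrKC.
- by move=> z [i [j [a [ij ->]]]]; exact: decomposable_v.
Qed.

Lemma cartan_homog_ker_annihilates {s y k l} c : cartan_homog s y -> psi y = 0 ->
  k != l -> br y (v k l c) = 0 /\ br (v k l c) y = 0.
Proof.
case=> _ ny _ py kl.
have root_ker x : in_root k l x -> psi x = 0 -> x = 0.
  move=> [d ->]; rewrite psi_v // => /(congr1 (fun X : 'M[A]_(m + n) => X k l)).
  by rewrite !mxE !eqxx /= => ->; exact: v0.
have [yv vy] := ny k l c kl.
by split; apply: root_ker => //; rewrite psi_br py ?glbr0l ?glbr0r.
Qed.

Lemma ker_psi_central t x : psi t = 0 -> br t x = 0 /\ br x t = 0.
Proof.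
move=> pt; have := stl_decomposition t.
rewrite /decomposable pt lift_diagonal ?subr0; last exact: diagonal0.
case=> [y0 [y1 [h0 h1 et]]].
have p1 : psi y1 = 0.
  by case: h1 => g1 _ d1; exact: diagonal_homog_odd d1 (psi_homog _ _ g1).
have p0 : psi y0 = 0 by move: pt; rewrite et psiD p1 addr0.
have gen_homog g : (exists i j a, i != j /\ g = v i j a) -> exists s, G s g.
  by case=> [i [j [a [ij ->]]]]; exists (tau i j); exact: v_homog.
have central s y : cartan_homog s y -> psi y = 0 -> br y x = 0 /\ br x y = 0.
  move=> hy py; apply: (central_of_annihilates_gen gen_homog L_gen (let: And3 g _ _ := hy in g)).
  by move=> g [i [j [a [ij ->]]]]; exact: cartan_homog_ker_annihilates _ hy py ij.
have [z0 z0'] := central _ _ h0 p0; have [z1 z1'] := central _ _ h1 p1.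
by rewrite et brDl brDr z0 z1 z0' z1' addr0.
Qed.

End Steinberg.

End LeibnizSuperalgebra.

Theorem theorem3p1 (K : fieldType) (A : algType K) (m n : nat)
  (L : lmodType K) (G : bool -> L -> Prop) (br : L -> L -> L)
  (v : 'I_(m + n) -> 'I_(m + n) -> A -> L)
  (psi : L -> 'M[A]_(m + n)) :
  (2%:R : K) != 0 -> (3%:R : K) != 0 ->
  (3 <= m + n)%N ->
  is_leibniz_superalgebra G br ->
  (forall i j a, i != j -> G (tau i j) (v i j a)) ->
  (forall i j (c : K) a b, i != j -> v i j (c *: a + b) = c *: v i j a + v i j b) ->
  (forall i j k l a b, i != j -> k != l -> i != l -> j != k ->
     br (v i j a) (v k l b) = 0) ->
  (forall i j l a b, i != j -> j != l -> i != l ->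
     br (v i j a) (v j l b) = v i l (a * b)) ->
  (forall i j k a b, i != j -> k != i -> j != k ->
     br (v i j a) (v k i b) = - (((-1) ^+ (tau i j && tau k i)) *: v k j (b * a))) ->
  generated_by br (fun x => exists i j a, i != j /\ x = v i j a) ->
  (forall (c : K) x y, psi (c *: x + y) = mx_scale c (psi x) + psi y) ->
  (forall x y, psi (br x y) = glbr (psi x) (psi y)) ->
  (forall s x, G s x -> mx_homog s (psi x)) ->
  (forall i j a, i != j -> psi (v i j a) = Emx i j a) ->
  forall t x, psi t = 0 -> br t x = 0 /\ br x t = 0.
Proof.
move=> _ _ three_le HL; exact: ker_psi_central.
Qed.
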